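(* Let $k\ge2$, $IS\in\{\Box,\blacksquare\}^k$, and let $\tau$ be a correct compositional translation from $\mathrm{SYNCSIMPLE}$ into $\mathrm{LOCKSIMPLE}_{k,IS}$. Then there is some $i$ such that $\tau(!)$ has a blocking subsequence of the form $RP_i$ or $P_iRP_i$, where $R$ contains neither $P_i$ nor $T_i$. The same holds for $\tau(?)$.
   Context: $\mathrm{SYNCSIMPLE}$: subprocesses $\mathcal{U} ::= \checkmark \mid 0 \mid\, !\mathcal{U} \mid\, ?\mathcal{U}$; processes are finite parallel compositions ($\mid$ associative, commutative, $0$ a unit). Reduction: $!\mathcal{U}_1\mid ?\mathcal{U}_2\mid \mathcal{P}\to \mathcal{U}_1\mid\mathcal{U}_2\mid\mathcal{P}$. Successful: of form $\checkmark\mid\mathcal{P}$; may-convergent: reduces to a successful process; must-convergent: every reachable process is may-convergent. $\mathrm{LOCKSIMPLE}_{k,IS}$ ($IS\in\{\Box,\blacksquare\}^k$, $\Box$ empty, $\blacksquare$ full): subprocesses are words over $\{P_1,T_1,\dots,P_k,T_k\}$ followed by $0$ or $\checkmark$; states $(\mathcal{P},C)$ reduce by $(P_i\mathcal{U}\mid\mathcal{P},C)\to(\mathcal{U}\mid\mathcal{P},C[C_i:=\blacksquare])$ only if $C_i=\Box$, and $(T_i\mathcal{U}\mid\mathcal{P},C)\to(\mathcal{U}\mid\mathcal{P},C[C_i:=\Box])$ always. Success = process contains $\checkmark$; a process $\mathcal{P}$ is may/must-convergent iff the state $(\mathcal{P},IS)$ is. A compositional translation $\tau$ is given by words $\tau(!),\tau(?)$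 with $\tau(0)=0$, $\tau(\checkmark)=\checkmark$, $\tau(!\mathcal{U})=\tau(!)\tau(\mathcal{U})$, $\tau(?\mathcal{U})=\tau(?)\tau(\mathcal{U})$, $\tau$ commuting with $\mid$; correct = preserves and reflects may- and must-convergence. Blocking prefix of a word $S$: a prefix of $S$ of the form $R_1P_iR_2P_i$ with $R_2$ containing no $P_i,T_i$, or of the form $R_1P_i$ with $R_1$ containing no $P_i,T_i$, such that executing $S$ alone as a single subprocess starting with store $IS$ gets stuck exactly before this last $P_i$. The suffix $P_iR_2P_i$, resp. $R_1P_i$, is then called a blocking subsequence of $S$. *)

From mathcomp Require Import all_boot.
From Stdlib Require Import Relations.
From Stdlib Require List.
Set Implicit Arguments. Unset Strict Implicit. Unset Printing Implicit Defensive.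

Inductive ssub : Type :=
  | SCheck : ssub
  | SZero : ssub
  | SSend : ssub -> ssub
  | SRecv : ssub -> ssub.

(** A process is a finite parallel composition, represented as a list of
    subprocesses (order is irrelevant for all notions below). *)
Definition sproc := seq ssub.

Definition sstep (P Q : sproc) : Prop :=
  exists (A B C : sproc) (x y x' y' : ssub),
    P = A ++ x :: B ++ y :: C /\ Q = A ++ x' :: B ++ y' :: C /\
    ((x = SSend x' /\ y = SRecv y') \/ (x = SRecv x' /\ y = SSend y')).

Definition sreach : relation sproc := clos_refl_trans sproc sstep.
Definition ssuccess (P : sproc) : Prop := List.In SCheck P.
Definition smay (P : sproc) : Prop := exists Q, sreach P Q /\ ssuccess Q.
Definition smust (P : sproc) : Prop := forall Q, sreach P Q -> smay Q.

Inductive letter (k : nat) : Type :=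
  | LP : 'I_k -> letter k
  | LT : 'I_k -> letter k.

Definition lock_of k (l : letter k) : 'I_k :=
  match l with LP i => i | LT i => i end.

(** A subprocess: a word followed by 0 (false) or checkmark (true). *)
Definition lsub k := (seq (letter k) * bool)%type.
Definition lproc k := seq (lsub k).
(** Store: true = full (black square), false = empty (white square). *)
Definition store k := {ffun 'I_k -> bool}.
Definition upd k (C : store k) (i : 'I_k) (b : bool) : store k :=
  [ffun j => if j == i then b else C j].

Definition lstate k := (lproc k * store k)%type.

Definition lstep k (s t : lstate k) : Prop :=
  exists (A B : lproc k) (l : letter k) (w : seq (letter k)) (b : bool),
    s.1 = A ++ (l :: w, b) :: B /\ t.1 = A ++ (w, b) :: B /\
    match l with
    | LP i => s.2 i = false /\ t.2 = upd s.2 i true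
    | LT i => t.2 = upd s.2 i false
    end.

Definition lreach k : relation (lstate k) := clos_refl_trans (lstate k) (@lstep k).
Definition lsuccess k (s : lstate k) : Prop := List.In ([::], true) s.1.
Definition lmay_state k (s : lstate k) : Prop :=
  exists t, lreach s t /\ lsuccess t.
Definition lmust_state k (s : lstate k) : Prop :=
  forall t, lreach s t -> lmay_state t.
Definition lmay k (IS : store k) (P : lproc k) := lmay_state (P, IS).
Definition lmust k (IS : store k) (P : lproc k) := lmust_state (P, IS).

(** * Compositional translations, given by the words tau(!) and tau(?) *)
Fixpoint tau_sub k (ws wr : seq (letter k)) (u : ssub) : lsub k :=
  match u with
  | SCheck => ([::], true)
  | SZero => ([::], false)
  | SSend u' => (ws ++ (tau_sub ws wr u').1, (tau_sub ws wr u').2)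
  | SRecv u' => (wr ++ (tau_sub ws wr u').1, (tau_sub ws wr u').2)
  end.

Definition tau_proc k (ws wr : seq (letter k)) (P : sproc) : lproc k :=
  map (tau_sub ws wr) P.

Definition correct_translation k (IS : store k) (ws wr : seq (letter k)) : Prop :=
  forall P : sproc,
    (smay P <-> lmay IS (tau_proc ws wr P)) /\
    (smust P <-> lmust IS (tau_proc ws wr P)).

Fixpoint run k (C : store k) (w : seq (letter k)) : option (store k) :=
  match w with
  | [::] => Some C
  | LP i :: w' => if C i then None else run (upd C i true) w'
  | LT i :: w' => run (upd C i false) w'
  end.

Definition free_of k (i : 'I_k) (R : seq (letter k)) : bool :=
  all (fun l => lock_of l != i) R.

(** [pre] is a blocking prefix of [S] (starting with store [IS]) whose last
    letter is [P_i]: [pre] is a prefix of [S] of the form R1 P_i R2 P_i with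
    R2 free of P_i,T_i, or R1 P_i with R1 free of P_i,T_i, and running [S]
    alone gets stuck exactly before this last P_i, i.e. the part before it
    executes without blocking and leaves lock i full. *)
Definition blocking_prefix k (IS : store k) (S : seq (letter k)) (i : 'I_k)
    (pre : seq (letter k)) : Prop :=
  exists body : seq (letter k),
    pre = rcons body (LP i) /\ (exists rest, S = pre ++ rest) /\
    ((exists R1 R2, body = R1 ++ LP i :: R2 /\ free_of i R2) \/ free_of i body) /\
    exists C, run IS body = Some C /\ C i = true.

(** The process !✓ has no communication partner, so it is not may-convergent;
    by correctness neither is its translation, the single word τ(!)✓ run from
    [IS].  Hence running τ(!) alone must get stuck, i.e. reach some P_i while
    lock i is full.  Lock i is full at that point only if the last letter on
    lock i read so far is a P_i (a T_i would have emptied it), or if no letter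
    on lock i was read and i was full initially: these are the two shapes of a
    blocking subsequence.  The same argument applies to ?✓ and τ(?). *)

From Stdlib Require Import Relations.
From mathcomp Require Import all_boot.

Set Implicit Arguments.
Unset Strict Implicit.
Unset Printing Implicit Defensive.

Lemma sstep_singleton (x : ssub) (Q : sproc) : ~ sstep [:: x] Q.
Proof.
by case=> [A [B [C [x0 [y [x' [y' [E _]]]]]]]]; move: E; case: A => [|? []] // [_]; case: B.
Qed.

Lemma sreach_singleton (x : ssub) (Q : sproc) : sreach [:: x] Q -> Q = [:: x].
Proof.
by move=> H; case: (clos_rt_rt1n _ _ _ _ H) => [| y z /sstep_singleton].
Qed.

Lemma smay_singleton (x : ssub) : smay [:: x] -> x = SCheck.
Proof.
by case=> Q [/sreach_singleton -> [-> | []]].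
Qed.

Section Run.

Variable k : nat.
Implicit Types (C D : store k) (w : seq (letter k)) (i : 'I_k).

Lemma run_cons_Some C D l w : run C (l :: w) = Some D ->
  run (upd C (lock_of l) (if l is LP _ then true else false)) w = Some D.
Proof. by case: l => j /=; [case: (C j) | ] => Hw. Qed.

Lemma run_lreach C D w (b : bool) :
  run C w = Some D -> lreach ([:: (w, b)], C) ([:: ([::], b)], D).
Proof.
elim: w C => [|l w IHw] C; first by case=> ->; apply: rt_refl.
move=> Hrun; apply: rt_trans (IHw _ (run_cons_Some Hrun)); apply: rt_step.
exists [::], [::], l, w, b; do 2!split=> //.
by case: l Hrun => j /=; [case: (C j) | ] => Hrun.
Qed.

Lemma run_None C w : run C w = None ->
  exists body i rest D, w = rcons body (LP i) ++ rest /\ run C body = Some D /\ D i.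
Proof.
elim: w C => [|l w IHw] C //=; case: l => i; last first.
  by case/IHw=> [body [j [rest [D [-> HD]]]]]; exists (LT i :: body), j, rest, D.
case Ci: (C i); first by exists [::], i, w, C.
by case/IHw=> [body [j [rest [D [-> HD]]]]]; exists (LP i :: body), j, rest, D; rewrite /= Ci.
Qed.

Lemma run_free_of C D w i : free_of i w -> run C w = Some D -> D i = C i.
Proof.
elim: w C => [|l w IHw] C /=; first by move=> _ [->].
by case/andP=> li Hfree /run_cons_Some/(IHw _ Hfree) ->; rewrite ffunE eq_sym (negbTE li).
Qed.

Lemma run_full_shape C D w i : run C w = Some D -> D i ->
  (exists R1 R2, w = R1 ++ LP i :: R2 /\ free_of i R2) \/ free_of i w.
Proof.
elim: w C => [|l w IHw] C; first by right.
move=> /run_cons_Some Hw Di; case: (IHw _ Hw Di) => [[R1 [R2 [-> HR2]]] | Hfree].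
  by left; exists (l :: R1), R2.
case: (eqVneq (lock_of l) i) => [li | ]; last by right; rewrite /= Hfree andbT.
case: l li Hw => j /= ji Hw; subst j; first by left; exists [::], w.
by move: Di; rewrite (run_free_of Hfree Hw) ffunE eqxx.
Qed.

Lemma stuck_blocking_prefix C w :
  ~ lmay C [:: (w, true)] -> exists i pre, blocking_prefix C w i pre.
Proof.
move=> stuck; case Hw: (run C w) => [D|].
  by case: stuck; exists ([:: ([::], true)], D); split; [apply: run_lreach | left].
have [body [i [rest [D [-> [Hbody Di]]]]]] := run_None Hw.
exists i, (rcons body (LP i)), body; split=> //; split; first by exists rest.
by split; [apply: run_full_shape Hbody Di | exists D].
Qed.

End Run.

Lemma correct_translation_lmay_singleton k (IS : store k) (ws wr : seq (letter k)) x :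
  correct_translation IS ws wr -> lmay IS [:: tau_sub ws wr x] -> x = SCheck.
Proof. by move=> tau_ok /(proj2 (proj1 (tau_ok [:: x])))/smay_singleton. Qed.

Lemma correct_translation_stuck_alone k (IS : store k) (ws wr : seq (letter k)) :
  correct_translation IS ws wr ->
  ~ lmay IS [:: (ws, true)] /\ ~ lmay IS [:: (wr, true)].
Proof.
move=> tau_ok; split=> Hmay.
- have := correct_translation_lmay_singleton (x := SSend SCheck) tau_ok.
  by rewrite /= cats0 => /(_ Hmay).
- have := correct_translation_lmay_singleton (x := SRecv SCheck) tau_ok.
  by rewrite /= cats0 => /(_ Hmay).
Qed.

Theorem lemma4p4 (k : nat) (hk : 2 <= k) (IS : store k) (ws wr : seq (letter k)) :
  correct_translation IS ws wr ->
  (exists (i : 'I_k) (pre : seq (letter k)), blocking_prefix IS ws i pre) /\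
  (exists (i : 'I_k) (pre : seq (letter k)), blocking_prefix IS wr i pre).
Proof.
(* The argument works for any number of locks. *)
by case/correct_translation_stuck_alone=> /stuck_blocking_prefix ? /stuck_blocking_prefix.
Qed.
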